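(* Let $\Omega=\bigcup_{j=1}^n (a_j,b_j)\subseteq\mathbb{R}$ be a finite union of bounded open intervals. Let $A\subseteq\mathbb{R}$ be a set with positive minimum gap $\delta$, i.e. $|a-a'|\ge\delta$ for all distinct $a,a'\in A$. Then there is a constant $C>0$, depending only on $\Omega$ and $\delta$, such that for every $R>0$, $$\sum_{a\in A,\ |a|>R} \left|\widehat{\chi_\Omega}(a)\right|^2 \le \frac{C}{R}.$$
   Context: $\chi_\Omega$ denotes the indicator function of $\Omega$, and the Fourier transform is $\widehat{f}(\xi)=\int_{\mathbb{R}} f(x)e^{-2\pi i x\xi}\,dx$. *)

From HB Require Import structures.
From mathcomp Require Import all_boot all_order all_algebra.
From mathcomp Require Import all_classical all_reals all_analysis.
Set Implicit Arguments. Unset Strict Implicit. Unset Printing Implicit Defensive.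
Import Order.TTheory GRing.Theory Num.Theory.
Local Open Scope classical_set_scope.
Local Open Scope ring_scope.

Definition Omega {R : realType} (n : nat) (a b : 'I_n -> R) : set R :=
  [set x | exists j : 'I_n, a j < x < b j].

(* Real and imaginary parts of  hat(chi_Omega)(xi) = int_Omega e^{-2 pi i x xi} dx *)
Definition FT_re {R : realType} (O : set R) (xi : R) : R :=
  Rintegral lebesgue_measure O (fun x => cos (2 * pi * x * xi)).
Definition FT_im {R : realType} (O : set R) (xi : R) : R :=
  - Rintegral lebesgue_measure O (fun x => sin (2 * pi * x * xi)).

Definition FT_sqnorm {R : realType} (O : set R) (xi : R) : R :=
  FT_re O xi ^+ 2 + FT_im O xi ^+ 2.

Definition has_min_gap {R : realType} (A : set R) (delta : R) : Prop :=
  forall x y, A x -> A y -> x <> y -> delta <= `|x - y|.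

From HB Require Import structures.
From mathcomp Require Import all_boot all_order all_algebra.
From mathcomp Require Import all_classical all_reals all_analysis.
From mathcomp Require Import ring lra.
Import Order.TTheory GRing.Theory Num.Theory.
Import numFieldNormedType.Exports.
Local Open Scope classical_set_scope.
Local Open Scope ring_scope.

(* Writing c = 2 pi xi, the functions cos (c x) and sin (c x) have primitives
   bounded by 1 / |c|, so their integrals over any interval are at most 2 / |c|
   in absolute value.  Inclusion-exclusion extends this to Omega; together
   with the trivial bound by |Omega| this gives
   |hat(chi_Omega)(xi)|^2 <= min (L, K / xi^2) for constants L, K.
   If y_0 < y_1 < ... are the points of A beyond r (on one side), then
   y_k >= r + k delta, and K / (r + k delta)^2 is dominated by the telescoping
   K / delta * (1 / (r + (k-1) delta) - 1 / (r + k delta)), so the tail sum is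
   O(1 / r). *)

Section IntervalIntegrals.
Context {R : realType}.
Local Notation mu := (@lebesgue_measure R).
(* Plain [measurable] on [set R] would infer a structure other than the
   domain of [lebesgue_measure]. *)
Local Notation lmeasurable := (@measurable _ (measurableTypeR R)).

Lemma continuous_integrable_bounded (f : R -> R) (A : set R) (T : R) :
  continuous f -> lmeasurable A -> A `<=` `[- T, T] -> mu.-integrable A (EFin \o f).
Proof.
move=> cf mA AT.
have If : mu.-integrable `[- T, T] (EFin \o f).
  apply: continuous_compact_integrable; first exact: segment_compact.
  by move=> x; apply: continuous_subspaceT.
exact: integrableS _ mA AT If.
Qed.

Lemma norm_Rintegral_itv_le_primitive (f F : R -> R) (B : R) :
  continuous f -> (forall x : R, is_derive x 1 F (f x)) -> (forall x, `|F x| <= B) ->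
  forall s t, `|\int[mu]_(x in `]s, t[) f x| <= 2 * B.
Proof.
move=> cf dF FB s t.
have B_ge0 : 0 <= B by apply: le_trans (FB 0).
have [st|ts] := ltP s t; last first.
  by rewrite set_itv_ge ?bnd_simp -?leNgt // Rintegral_set0 normr0 mulr_ge0.
have ic : mu.-integrable `[s, t] (EFin \o f).
  apply: continuous_compact_integrable; first exact: segment_compact.
  by move=> x; apply: continuous_subspaceT.
rewrite Rintegral_itv_obnd_cbnd; last first.
  by apply: integrableS ic => //; apply: subset_itv_oo_cc.
rewrite Rintegral_itv_bndo_bndc; last first.
  by apply: integrableS ic => //; apply: subset_itv; rewrite bnd_simp.
have Fcont x : {for x, continuous F}.
  by apply: differentiable_continuous; apply/derivable1_diffP; exact: ex_derive.
rewrite /Rintegral (@continuous_FTC2 _ f F _ _ st) /=.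
- by apply: le_trans (ler_normB _ _) _; rewrite mulrDl mul1r lerD.
- by move=> x; apply: continuous_subspaceT.
- split; first by move=> x _; exact: ex_derive.
  + exact: cvg_at_right_filter (Fcont s).
  + exact: cvg_at_left_filter (Fcont t).
- by move=> x _; rewrite derive1E derive_val.
Qed.

Lemma norm_Rintegral_le_bounded (f : R -> R) (A : set R) (T : R) :
  continuous f -> (forall x, `|f x| <= 1) -> lmeasurable A ->
  0 <= T -> A `<=` `[- T, T] -> `|\int[mu]_(x in A) f x| <= 2 * T.
Proof.
move=> cf f1 mA T_ge0 AT.
have If := continuous_integrable_bounded _ _ _ cf mA AT.
apply: le_trans (le_normr_Rintegral mA If) _.
have cnf : continuous (fun x => `|f x|).
  by move=> x; apply: continuous_comp; [exact: cf | exact: norm_continuous].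
apply: le_trans (_ : \int[mu]_(x in A) 1 <= _).
  apply: le_Rintegral => //; first exact: continuous_integrable_bounded _ _ _ cnf mA AT.
  by apply: (continuous_integrable_bounded _ _ _ _ mA AT) => x; exact: cvg_cst.
rewrite Rintegral_cst // mul1r.
have muA_le : (mu A <= (2 * T)%:E)%E.
  have : (mu A <= mu `[(- T)%R, T])%E.
    by apply: le_measure => //; rewrite inE //; exact: measurable_itv.
  move/le_trans; apply; rewrite lebesgue_measure_itv /=.
  by case: ifP => _; rewrite ?lte_fin -?EFinB lee_fin; lra.
have muA_fin : mu A \is a fin_num.
  by rewrite ge0_fin_numE ?measure_ge0 // (le_lt_trans muA_le) ?ltey.
by rewrite -lee_fin fineK.
Qed.

Lemma Rintegral_setU_setI (f : R -> R) (A B : set R) :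
  lmeasurable A -> lmeasurable B -> mu.-integrable (A `|` B) (EFin \o f) ->
  \int[mu]_(x in A `|` B) f x =
  \int[mu]_(x in A) f x + \int[mu]_(x in B) f x - \int[mu]_(x in B `&` A) f x.
Proof.
move=> mA mB iAB.
have AUB : A `|` B = A `|` (B `\` A).
  by apply/seteqP; split=> x /=; case: (pselect (A x)); tauto.
have BE : B = (B `\` A) `|` (B `&` A).
  by apply/seteqP; split=> x /=; case: (pselect (A x)); tauto.
have iB : mu.-integrable B (EFin \o f).
  by apply: (integrableS _ _ _ iAB) => //; exact: measurableU.
have mBA : lmeasurable (B `\` A) by exact: measurableD.
have disj1 : [disjoint A & B `\` A] by apply/disj_setPS => x /= [? []].
have disj2 : [disjoint B `\` A & B `&` A] by apply/disj_setPS => x /= [[? ?] [? ?]].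
have := @Rintegral_setU _ _ _ mu _ _ f mA mBA; rewrite -AUB => /(_ iAB disj1) ->.
have := @Rintegral_setU _ _ _ mu _ _ f mBA (measurableI _ _ mB mA).
by rewrite -BE => /(_ iB disj2) ->; rewrite addrA addrK.
Qed.

Definition itv_union (s : seq (R * R)) : set R :=
  [set x | exists2 p, p \in s & p.1 < x < p.2].

Definition clip_itvs (p : R * R) (s : seq (R * R)) : seq (R * R) :=
  [seq (Num.max q.1 p.1, Num.min q.2 p.2) | q <- s].

Lemma itv_union_nil : itv_union [::] = set0.
Proof. by apply/seteqP; split=> x // [p]. Qed.

Lemma itv_union_cons (p : R * R) s :
  itv_union (p :: s) = `]p.1, p.2[ `|` itv_union s.
Proof.
apply/seteqP; split=> x /=.
  case=> q; rewrite inE => /orP[/eqP-> | qs] xq; first by left; rewrite in_itv.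
  by right; exists q.
case=> [|[q qs xq]]; first by rewrite in_itv => xp; exists p => //; rewrite mem_head.
by exists q => //; rewrite inE qs orbT.
Qed.

Lemma measurable_itv_union s : lmeasurable (itv_union s).
Proof.
elim: s => [|p s IHs]; first by rewrite itv_union_nil.
by rewrite itv_union_cons; apply: measurableU => //; exact: measurable_itv.
Qed.

Lemma itv_union_bounded s : exists2 T, 0 <= T & itv_union s `<=` `[- T, T].
Proof.
elim: s => [|p s [T T_ge0 sT]]; first by exists 0; rewrite ?itv_union_nil.
exists (`|p.1| + `|p.2| + T); first by rewrite !addr_ge0.
have := ler_norm (- p.1); have := ler_norm p.2; rewrite normrN.
move: (normr_ge0 p.1) (normr_ge0 p.2) => ? ? ? ?.
rewrite itv_union_cons => x [|/sT]; rewrite /= !in_itv /= => /andP[? ?];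
  apply/andP; split; lra.
Qed.

Lemma itv_unionI_itv (p : R * R) s :
  itv_union s `&` `]p.1, p.2[ = itv_union (clip_itvs p s).
Proof.
apply/seteqP; split=> x /=.
  move=> [[q qs /andP[? ?]]]; rewrite in_itv /= => /andP[? ?].
  exists (Num.max q.1 p.1, Num.min q.2 p.2); first by apply/mapP; exists q.
  by rewrite /= gt_max lt_min -!andbA; apply/and4P.
move=> [_ /mapP[q qs ->]]; rewrite /= gt_max lt_min -!andbA => /and4P[? ? ? ?].
by split; [exists q => //; apply/andP | rewrite in_itv /=; apply/andP].
Qed.

(* Inclusion-exclusion against the first interval, iterated; clipping keeps
   the number of intervals, hence the factor 2 ^ size s. *)
Lemma norm_Rintegral_itv_union_le_primitive (f F : R -> R) (B : R) s :
  continuous f -> (forall x : R, is_derive x 1 F (f x)) -> (forall x, `|F x| <= B) ->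
  `|\int[mu]_(x in itv_union s) f x| <= (2 ^+ size s - 1) * (2 * B).
Proof.
move=> cf dF FB; have itv_le := norm_Rintegral_itv_le_primitive _ _ _ cf dF FB.
move sn : (size s) => n; elim: n s sn => [|n IHn] [|p s] //=.
  by rewrite itv_union_nil Rintegral_set0 normr0 expr0 subrr mul0r.
move=> [sn]; have clip_le := IHn (clip_itvs p s) (etrans (size_map _ s) sn).
have [T _ psT] := itv_union_bounded (p :: s).
rewrite itv_union_cons Rintegral_setU_setI; last 3 first.
- exact: measurable_itv.
- exact: measurable_itv_union.
- rewrite -itv_union_cons; apply: continuous_integrable_bounded psT => //.
  exact: measurable_itv_union.
rewrite itv_unionI_itv.
apply: le_trans (ler_normB _ _) _; apply: le_trans (lerD (ler_normD _ _) clip_le) _.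
apply: le_trans (lerD (lerD (itv_le p.1 p.2) (IHn s sn)) (lexx _)) _.
rewrite exprS; suff -> : (2 * 2 ^+ n - 1) * (2 * B) =
  2 * B + (2 ^+ n - 1) * (2 * B) + (2 ^+ n - 1) * (2 * B) by [].
ring.
Qed.

Lemma is_derive_mulrl (c x : R) : is_derive x 1 ( *%R c) c.
Proof. by apply: is_derive_eq; rewrite /GRing.scale /= mulr1. Qed.

Lemma is_derive_sin_mulrl (c x : R) : c != 0 ->
  is_derive x 1 (fun y => c^-1 * sin (c * y)) (cos (c * x)).
Proof.
move=> c_neq0.
have := is_deriveM (is_derive_cst c^-1 x 1)
  (is_derive1_comp (is_derive_sin (c * x)) (is_derive_mulrl c x)).
by rewrite scaler0 addr0 /GRing.scale /= mulrCA mulVf // mulr1.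
Qed.

Lemma is_derive_cos_mulrl (c x : R) : c != 0 ->
  is_derive x 1 (fun y => - c^-1 * cos (c * y)) (sin (c * x)).
Proof.
move=> c_neq0.
have := is_deriveM (is_derive_cst (- c^-1) x 1)
  (is_derive1_comp (is_derive_cos (c * x)) (is_derive_mulrl c x)).
rewrite scaler0 addr0 /GRing.scale /=.
have -> // : - c^-1 * (- sin (c * x) * c) = sin (c * x).
by rewrite !mulNr mulrN opprK mulrCA mulVf // mulr1.
Qed.

Lemma continuous_comp_mulrl (g : R -> R) (c : R) :
  continuous g -> continuous (fun x => g (c * x)).
Proof. by move=> cg x; apply: continuous_comp; [exact: mulrl_continuous | exact: cg]. Qed.

Lemma sqr_le_norm (a E : R) : `|a| <= E -> a ^+ 2 <= E ^+ 2.
Proof.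
move=> aE; rewrite -real_normK ?num_real // lerXn2r ?nnegrE //.
exact: le_trans aE.
Qed.

Lemma FT_sqnormE (O : set R) (xi : R) : FT_sqnorm O xi =
  (\int[mu]_(x in O) cos (2 * pi * xi * x)) ^+ 2 +
  (\int[mu]_(x in O) sin (2 * pi * xi * x)) ^+ 2.
Proof.
rewrite /FT_sqnorm /FT_re /FT_im sqrrN.
by congr (_ ^+ 2 + _ ^+ 2); apply: eq_Rintegral => x _; rewrite mulrAC.
Qed.

Lemma FT_sqnorm_itv_union_le s (T xi : R) : 0 <= T -> itv_union s `<=` `[- T, T] ->
  FT_sqnorm (itv_union s) xi <= 2 * (2 * T) ^+ 2.
Proof.
move=> T_ge0 sT; rewrite FT_sqnormE; set c := 2 * pi * xi.
have trig_le (g : R -> R) : continuous g -> (forall x, `|g x| <= 1) ->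
    (\int[mu]_(x in itv_union s) g (c * x)) ^+ 2 <= (2 * T) ^+ 2.
  move=> cg g1; apply: sqr_le_norm; apply: norm_Rintegral_le_bounded => //.
  - exact: continuous_comp_mulrl.
  - exact: measurable_itv_union.
have := trig_le _ (@continuous_cos R) (@cos_max R).
have := trig_le _ (@continuous_sin R) (@sin_max R).
lra.
Qed.

(* Each of the two integrals is at most (2 ^ n - 1) * 2 / |2 pi xi|. *)
Lemma sqr_mul_FT_sqnorm_itv_union_le s (xi : R) :
  xi ^+ 2 * FT_sqnorm (itv_union s) xi <= 2 * ((2 ^+ size s - 1) / pi) ^+ 2.
Proof.
have [->|xi_neq0] := eqVneq xi 0; first by rewrite expr0n mul0r mulr_ge0 ?sqr_ge0.
set c := 2 * pi * xi.
have c_neq0 : c != 0 by rewrite !mulf_neq0 // gt_eqF ?pi_gt0.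
set N : R := 2 ^+ size s - 1.
have xi_bound : `|xi| * (N * (2 * `|c|^-1)) = N / pi.
  rewrite /c !normrM (gtr0_norm (@pi_gt0 R)) (@ger0_norm _ 2) //.
  have : pi != 0 :> R by rewrite gt_eqF ?pi_gt0.
  move: (pi : R) => P P_neq0; field.
  by rewrite P_neq0 normr_eq0 xi_neq0.
have sqr_bound (I : R) : `|I| <= N * (2 * `|c|^-1) -> xi ^+ 2 * I ^+ 2 <= (N / pi) ^+ 2.
  by move=> /(ler_wpM2l (normr_ge0 xi)); rewrite xi_bound -normrM => /sqr_le_norm;
    rewrite exprMn.
have sin_primitive_le x : `|c^-1 * sin (c * x)| <= `|c|^-1.
  by rewrite normrM normfV ler_piMr ?invr_ge0 ?sin_max.
have cos_primitive_le x : `|- c^-1 * cos (c * x)| <= `|c|^-1.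
  by rewrite mulNr normrN normrM normfV ler_piMr ?invr_ge0 ?cos_max.
have := sqr_bound _ (norm_Rintegral_itv_union_le_primitive _ _ _ s
  (continuous_comp_mulrl _ c (@continuous_cos R))
  (fun x => is_derive_sin_mulrl c x c_neq0) sin_primitive_le).
have := sqr_bound _ (norm_Rintegral_itv_union_le_primitive _ _ _ s
  (continuous_comp_mulrl _ c (@continuous_sin R))
  (fun x => is_derive_cos_mulrl c x c_neq0) cos_primitive_le).
rewrite FT_sqnormE; lra.
Qed.

End IntervalIntegrals.

Section SeparatedSums.
Context {R : realType}.
Variables (h : R -> R) (L K d : R).
Hypotheses (d_gt0 : 0 < d) (K_ge0 : 0 <= K) (h_ge0 : forall y, 0 <= h y)
  (h_le : forall y, h y <= L) (h_decay : forall y, y ^+ 2 * h y <= K).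

Lemma decay_le_div_sqr (u y : R) : 0 < u -> u <= y -> h y <= K / u ^+ 2.
Proof.
move=> u_gt0 uy; have y_gt0 : 0 < y by apply: lt_le_trans uy.
apply: le_trans (_ : K / y ^+ 2 <= _).
  by rewrite ler_pdivlMr ?exprn_gt0 // mulrC.
rewrite ler_wpM2l // lef_pV2 ?posrE ?exprn_gt0 //.
by rewrite lerXn2r // nnegrE ltW.
Qed.

Lemma decay_le_div (r y : R) : 0 < r -> r <= y -> h y <= (L + K) / r.
Proof.
move=> r_gt0 ry; have L_ge0 : 0 <= L := le_trans (h_ge0 0) (h_le 0).
have hy_ge0 := h_ge0 y; rewrite ler_pdivlMr //; have [r_ge1|r_lt1] := leP 1 r.
  have := decay_le_div_sqr _ _ r_gt0 ry; rewrite ler_pdivlMr ?exprn_gt0 // => hr2.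
  apply: le_trans (_ : h y * r ^+ 2 <= _).
    by rewrite ler_wpM2l // expr2 ler_peMl // ltW.
  by rewrite (le_trans hr2) // lerDr.
apply: le_trans (_ : h y <= _); first by rewrite ler_piMr // ltW.
by rewrite (le_trans (h_le y)) // lerDl.
Qed.

(* With x = y_k, the term K / (x + d)^2 bounding h (y_(k+1)) fits in the
   telescoping gap K / (d x) - K / (d (x + d)). *)
Lemma sqr_telescope (x : R) : 0 < x ->
  K / (x + d) ^+ 2 + K / (d * (x + d)) <= K / (d * x).
Proof.
move=> x_gt0; have xd_gt0 : 0 < x + d by rewrite addr_gt0.
rewrite -subr_ge0.
have -> : K / (d * x) - (K / (x + d) ^+ 2 + K / (d * (x + d))) =
    K * d / (x * (x + d) ^+ 2).
  by field; rewrite (gt_eqF xd_gt0) (gt_eqF x_gt0) (gt_eqF d_gt0).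
by rewrite divr_ge0 ?mulr_ge0 ?sqr_ge0 ?(ltW d_gt0) ?(ltW x_gt0) ?(ltW xd_gt0).
Qed.

Lemma sum_sorted_separated_le (s : seq R) (t B : R) :
  sorted <=%R s -> uniq s -> {in s &, forall y z, y != z -> d <= `|y - z|} ->
  0 < t -> (forall y, t <= y -> h y <= B) -> {in s, forall y, t <= y} ->
  \sum_(y <- s) h y <= B + K / (d * t).
Proof.
elim: s t B => [|x s IHs] t B sorted_s uniq_s sep t_gt0 hB ts.
  have B_ge0 : 0 <= B := le_trans (h_ge0 t) (hB t (lexx t)).
  by rewrite big_nil addr_ge0 // divr_ge0 // mulr_ge0 ?(ltW d_gt0) ?(ltW t_gt0).
rewrite big_cons; move: uniq_s => /= /andP[x_notin_s uniq_s].
have tx : t <= x by apply: ts; rewrite mem_head.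
have x_gt0 : 0 < x by apply: lt_le_trans tx.
have xds : {in s, forall y, x + d <= y}.
  move=> y ys; have xy : x <= y by apply: (allP (order_path_min le_trans sorted_s)).
  have x_neq_y : x != y by apply: contraNneq x_notin_s => ->.
  have := sep x y (mem_head _ _) (@mem_behead _ (x :: s) _ ys) x_neq_y.
  by rewrite distrC ger0_norm ?subr_ge0 //; lra.
have := IHs (x + d) (K / (x + d) ^+ 2) (path_sorted sorted_s) uniq_s
  (sub_in2 (@mem_behead _ (x :: s)) sep) (addr_gt0 x_gt0 d_gt0)
  (fun y => decay_le_div_sqr _ _ (addr_gt0 x_gt0 d_gt0)) xds.
have := sqr_telescope _ x_gt0; have := hB x tx.
have : K / (d * x) <= K / (d * t).
  by rewrite ler_wpM2l // lef_pV2 ?posrE ?mulr_gt0 // ler_wpM2l // ltW.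
lra.
Qed.

Lemma sum_separated_ge_le (l : seq R) (r : R) : 0 < r -> uniq l ->
  {in l &, forall y z, y != z -> d <= `|y - z|} -> {in l, forall y, r <= y} ->
  \sum_(y <- l) h y <= (L + K + K / d) / r.
Proof.
move=> r_gt0 uniq_l sep rl.
rewrite -(perm_big _ (permEl (perm_sort <=%R l))).
have -> : (L + K + K / d) / r = (L + K) / r + K / (d * r).
  by field; rewrite !gt_eqF.
apply: sum_sorted_separated_le => //.
- exact: sort_sorted le_total l.
- by rewrite sort_uniq.
- by move=> y z; rewrite !mem_sort; exact: sep.
- by move=> y; exact: decay_le_div.
- by move=> y; rewrite mem_sort; exact: rl.
Qed.

End SeparatedSums.

Lemma sum_separated_abs_gt_le {R : realType} (h : R -> R) (L K d r : R) (l : seq R) :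
  0 < d -> 0 <= K -> 0 < r -> (forall y, 0 <= h y) -> (forall y, h y <= L) ->
  (forall y, y ^+ 2 * h y <= K) ->
  uniq l -> {in l &, forall y z, y != z -> d <= `|y - z|} -> {in l, forall y, r < `|y|} ->
  \sum_(y <- l) h y <= 2 * ((L + K + K / d) / r).
Proof.
move=> d_gt0 K_ge0 r_gt0 h_ge0 h_le h_decay uniq_l sep rl.
rewrite (bigID (fun y => 0 < y)) /= mulr2n mulrDl mul1r.
apply: lerD; rewrite -big_filter.
  apply: sum_separated_ge_le => //.
  - by rewrite filter_uniq.
  - by move=> y z; rewrite !mem_filter => /andP[_ ?] /andP[_ ?]; exact: sep.
  - move=> y; rewrite mem_filter => /andP[y_gt0 yl].
    by have := rl y yl; rewrite gtr0_norm // => /ltW.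
rewrite (eq_big_seq (fun y => h (- - y))) => [|y _]; last by rewrite opprK.
rewrite -(big_map -%R xpredT (fun z => h (- z))).
apply: (@sum_separated_ge_le _ (fun z => h (- z))) => //.
- by move=> y; rewrite -sqrrN.
- by rewrite map_inj_uniq ?filter_uniq //; exact: oppr_inj.
- move=> _ _ /mapP[y yl' ->] /mapP[z zl' ->] yz.
  rewrite -opprD normrN; apply: sep; rewrite ?(mem_filter, inE) in yl' zl'.
  + by case/andP: yl'.
  + by case/andP: zl'.
  + by apply: contraNneq yz => ->.
- move=> _ /mapP[y yl' ->]; rewrite mem_filter -leNgt in yl'.
  case/andP: yl' => y_le0 yl.
  by have := rl y yl; rewrite ler0_norm // => /ltW.
Qed.

Lemma Omega_itv_union {R : realType} n (a b : 'I_n -> R) :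
  Omega a b = itv_union [seq (a j, b j) | j <- enum 'I_n].
Proof.
apply/seteqP; split=> x /=.
  by move=> [j xj]; exists (a j, b j) => //; apply/mapP; exists j; rewrite ?mem_enum.
by move=> [_ /mapP[j _ ->] xj]; exists j.
Qed.

Theorem lemma1 (R : realType) (n : nat) (a b : 'I_n -> R)
  (hab : forall j, a j < b j) (delta : R) (hdelta : 0 < delta) :
  exists C : R, 0 < C /\
    forall A : set R, has_min_gap A delta ->
    forall r : R, 0 < r ->
      (esum [set y | A y /\ (r < `|y|)%R] (fun x => (FT_sqnorm (Omega a b) x)%:E)
        <= (C / r)%:E)%E.
Proof.
rewrite Omega_itv_union; set s := [seq _ | _ <- _].
have [T T_ge0 sT] := itv_union_bounded s.
set h := FT_sqnorm (itv_union s).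
have h_ge0 y : 0 <= h y by rewrite /h /FT_sqnorm addr_ge0 ?sqr_ge0.
set L := 2 * (2 * T) ^+ 2; set K : R := 2 * ((2 ^+ size s - 1) / pi) ^+ 2.
have K_ge0 : 0 <= K by rewrite mulr_ge0 ?sqr_ge0.
have L_ge0 : 0 <= L by rewrite mulr_ge0 ?sqr_ge0.
exists (2 * (L + K + K / delta) + 1); split.
  by rewrite ltr_pwDr // mulr_ge0 // !addr_ge0 // divr_ge0 // ltW.
move=> A sepA r r_gt0; apply: ge_ereal_sup => _ [X [finX XA] <-].
rewrite fsbig_finite // sumEFin lee_fin.
set l := finmap.enum_fset (fset_set X).
have lX y : y \in l -> X y by rewrite in_fset_set // inE.
apply: le_trans (sum_separated_abs_gt_le h L K delta r l hdelta K_ge0 r_gt0 h_ge0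
  (fun y => FT_sqnorm_itv_union_le s T y T_ge0 sT) (sqr_mul_FT_sqnorm_itv_union_le s)
  (finmap.fset_uniq _) _ _) _.
- move=> y z /lX/XA[Ay _] /lX/XA[Az _] /eqP yz; exact: sepA.
- by move=> y /lX/XA[].
by rewrite mulrA ler_pM2r ?invr_gt0 // lerDl.
Qed.
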